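(* Let $X$ be a finite connected simplicial complex and $\delta$ a cellular perversity. The family $\mathcal B(X,\delta)=\{U(\Delta,\delta)\}_{\Delta}$, indexed by all simplices $\Delta$ of $X$, is a base for a topology on $X$.
   Context: Simplices are open and $X$ is their disjoint union; $\Delta\leftrightarrow\Delta'$ means one is a face of the other. Cellular perversity: $\delta:\mathbb Z_{\ge0}\to\mathbb Z$, $\delta(0)=0$, bijective from each $\{0,\dots,k\}$ onto an interval $\{a,\dots,a+k\}$, $a\le0$; $\delta(\Delta)=\delta(\dim\Delta)$. Order $\Lambda(X,\delta)$: $\Delta\ge\Delta'$ iff there is a chain $\Delta=\Delta_0,\dots,\Delta_r=\Delta'$ ($r\ge0$) with $\Delta_i\leftrightarrow\Delta_{i+1}$ and $\delta(\Delta_i)=\delta(\Delta_{i+1})+1$. The perverse star is $U(\Delta,\delta)=\bigsqcup_{\Delta'\le\Delta}\Delta'$. *)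

From HB Require Import structures.
From mathcomp Require Import all_boot all_order all_algebra.
Set Implicit Arguments. Unset Strict Implicit. Unset Printing Implicit Defensive.
Import Order.TTheory GRing.Theory Num.Theory.

(* ---------- Abstract finite simplicial complex on a finite vertex type V.
   K is the set of vertex sets of simplices; a simplex is a NONEMPTY member. *)
Definition simplex (V : finType) (K : {set {set V}}) (A : {set V}) : bool :=
  (A \in K) && (A != set0).

Definition simplicial_complex (V : finType) (K : {set {set V}}) : Prop :=
  forall A B : {set V}, A \in K -> B \subset A -> B != set0 -> B \in K.

Definition incident (V : finType) (K : {set {set V}}) (A B : {set V}) : bool :=
  [&& simplex K A, simplex K B & (A \subset B) || (B \subset A)].

Definition sc_connected (V : finType) (K : {set {set V}}) : Prop :=
  forall A B, simplex K A -> simplex K B ->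
    exists s : seq {set V}, path (incident K) A s /\ last A s = B.

Definition sdim (V : finType) (A : {set V}) : nat := #|A|.-1.

Local Open Scope ring_scope.
Definition cellular_perversity (delta : nat -> int) : Prop :=
  delta 0%N = 0 /\
  forall k : nat, exists a : int, a <= 0 /\
    (forall i j : nat, (i <= k)%N -> (j <= k)%N -> delta i = delta j -> i = j) /\
    (forall i : nat, (i <= k)%N -> a <= delta i <= a + k%:Z) /\
    (forall z : int, a <= z <= a + k%:Z -> exists2 i : nat, (i <= k)%N & delta i = z).

Definition pdelta (V : finType) (delta : nat -> int) (A : {set V}) : int :=
  delta (sdim A).

Definition pstep (V : finType) (K : {set {set V}}) (delta : nat -> int)
  (A B : {set V}) : bool :=
  incident K A B && (pdelta delta A == pdelta delta B + 1).

Definition pge (V : finType) (K : {set {set V}}) (delta : nat -> int)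
  (A B : {set V}) : Prop :=
  simplex K A /\
  exists s : seq {set V}, path (pstep K delta) A s /\ last A s = B.

(* ---------- Geometric realization: points are barycentric coordinate vectors. *)

Definition in_open_simplex (R : realFieldType) (V : finType) (A : {set V})
  (x : V -> R) : Prop :=
  (forall v, 0 <= x v) /\ \sum_(v : V) x v = 1 /\ [set v | x v != 0] = A.

Definition realization (R : realFieldType) (V : finType) (K : {set {set V}})
  (x : V -> R) : Prop :=
  exists A, simplex K A /\ in_open_simplex A x.

Definition perverse_star (R : realFieldType) (V : finType) (K : {set {set V}})
  (delta : nat -> int) (A : {set V}) (x : V -> R) : Prop :=
  exists B, pge K delta A B /\ in_open_simplex B x.

Definition is_base_for_topology (T I : Type) (X : T -> Prop) (D : I -> Prop)
  (B : I -> T -> Prop) : Prop :=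
  (forall i, D i -> forall x, B i x -> X x) /\
  (forall x, X x -> exists i, D i /\ B i x) /\
  (forall i j x, D i -> D j -> B i x -> B j x ->
     exists k, D k /\ B k x /\ (forall y, B k y -> B i y /\ B j y)).

From mathcomp Require Import all_boot all_order all_algebra.
Set Implicit Arguments. Unset Strict Implicit. Unset Printing Implicit Defensive.

(* Every point x of |X| lies in exactly one open simplex, its carrier, and x
   lies in U(D) iff its carrier is <= D.  Since <= is a preorder on the
   simplices, U(carrier x) contains x and is contained in every U(D) through x,
   so the perverse stars form a base. *)

Section PerverseOrder.

Variables (V : finType) (K : {set {set V}}) (delta : nat -> int).

Lemma pge_refl A : simplex K A -> pge K delta A A.
Proof. by move=> sA; split=> //; exists [::]. Qed.

Lemma pge_trans A B C : pge K delta A B -> pge K delta B C -> pge K delta A C.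
Proof.
move=> [sA [s1 [p1 l1]]] [_ [s2 [p2 l2]]]; split=> //; exists (s1 ++ s2).
by rewrite cat_path last_cat l1 p1 p2 l2.
Qed.

Lemma pge_simplex A B : pge K delta A B -> simplex K B.
Proof.
move=> [sA [s [p <-]]]; elim: s A sA p => [|b s IH] A sA //=.
by case/andP=> /andP[/and3P[_ sb _] _]; exact: IH.
Qed.

End PerverseOrder.

Lemma open_simplex_uniq (R : realFieldType) (V : finType) (A B : {set V})
    (x : V -> R) :
  in_open_simplex A x -> in_open_simplex B x -> A = B.
Proof. by move=> [_ [_ <-]] [_ [_ <-]]. Qed.

Section PerverseStar.

Variables (R : realFieldType) (V : finType) (K : {set {set V}}).
Variable delta : nat -> int.

Lemma perverse_star_carrier A (x : V -> R) :
  simplex K A -> in_open_simplex A x -> perverse_star K delta A x.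
Proof. by move=> sA oA; exists A; split=> //; exact: pge_refl. Qed.

Lemma perverse_star_realization A (x : V -> R) :
  perverse_star K delta A x -> realization K x.
Proof. by move=> [B [pAB oB]]; exists B; split=> //; exact: pge_simplex pAB. Qed.

Lemma perverse_star_mono A B (x : V -> R) :
  pge K delta A B -> perverse_star K delta B x -> perverse_star K delta A x.
Proof. by move=> pAB [C [pBC oC]]; exists C; split=> //; exact: pge_trans pBC. Qed.

End PerverseStar.

Theorem lemma2p3p3 (R : realFieldType) (V : finType) (K : {set {set V}})
  (delta : nat -> int) :
  simplicial_complex K -> sc_connected K -> cellular_perversity delta ->
  is_base_for_topology (realization (R := R) K)
    (fun A : {set V} => simplex K A)
    (fun A : {set V} => perverse_star (R := R) K delta A).
Proof.
move=> _ _ _; split; [|split].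
- by move=> A _ x; exact: perverse_star_realization.
- move=> x [A [sA oA]]; exists A; split=> //.
  exact: perverse_star_carrier.
- move=> A B x _ _ [C [pAC oC]] [C' [pBC' oC']].
  have eCC' : C = C' := open_simplex_uniq oC oC'.
  subst C'.
  have sC : simplex K C := pge_simplex pAC.
  exists C; split=> //; split; first exact: perverse_star_carrier.
  by move=> y yC; split; [exact: perverse_star_mono pAC yC
                         | exact: perverse_star_mono pBC' yC].
Qed.
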